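(* Let $$A= \begin{pmatrix} 1& -2& 2\\ 2&-1& 2\\ 2&-2& 3 \end{pmatrix}.$$ For positive integers $m,n$ define the triple $F(m,n)=(x,y,z)$ by $$x = \frac{3-(-1)^m}{2}mn+m,\qquad y = \frac{x^2-m^2}{2m},\qquad z = \frac{x^2+m^2}{2m}.$$ Then for every positive integer $n$, $$A^{n-1}\begin{pmatrix}3\\4\\5\end{pmatrix} = F(1,n)^\top .$$
   Context: $A^0$ denotes the $3\times 3$ identity matrix; triples are regarded as row vectors and $\top$ denotes transpose. *)

From mathcomp Require Import all_boot all_order all_algebra.
Set Implicit Arguments. Unset Strict Implicit. Unset Printing Implicit Defensive.
Import Order.TTheory GRing.Theory Num.Theory.
Local Open Scope ring_scope.

Definition Amx : 'M[rat]_3 :=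
  \matrix_(i < 3, j < 3)
    (nth 0 (nth [::] [:: [:: 1; -2; 2]; [:: 2; -1; 2]; [:: 2; -2; 3]] i) j : rat).

Definition v345 : 'cV[rat]_3 := \col_(i < 3) (nth 0 [:: 3; 4; 5] i : rat).

Definition Fx (m n : nat) : rat :=
  (3 - (-1) ^+ m) / 2 * m%:R * n%:R + m%:R.
Definition Fy (m n : nat) : rat := (Fx m n ^+ 2 - m%:R ^+ 2) / (2 * m%:R).
Definition Fz (m n : nat) : rat := (Fx m n ^+ 2 + m%:R ^+ 2) / (2 * m%:R).
Definition F (m n : nat) : 'rV[rat]_3 :=
  \row_(j < 3) nth 0 [:: Fx m n; Fy m n; Fz m n] j.

From mathcomp Require Import all_boot all_order all_algebra.
From mathcomp Require Import ring.
Import GRing.Theory.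
Local Open Scope ring_scope.

(* F(1,n) = (2n+1, 2n(n+1), 2n(n+1)+1) is the Pythagorean triple whose longer
   leg and hypotenuse are consecutive integers.  A direct computation shows
   that A sends the n-th such triple to the (n+1)-st, and (3,4,5) is the
   first one. *)

Lemma mulmx_expr_orbit {R : pzRingType} {p : nat} {M : 'M[R]_p}
    {v : nat -> 'cV[R]_p} :
  (forall k, M *m v k = v k.+1) -> forall k m, M ^+ k *m v m = v (k + m)%N.
Proof.
move=> Mv; elim=> [|k IHk] m; first by rewrite expr0 mul1mx.
by rewrite exprS -mulmxA IHk Mv addSn.
Qed.

Definition consecutive_triple (n : nat) : 'cV[rat]_3 :=
  \col_(i < 3) nth 0 [:: 2 * n%:R + 1; 2 * n%:R * (n%:R + 1);
                         2 * n%:R * (n%:R + 1) + 1] i.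

Lemma F1_trE (n : nat) : (F 1 n)^T = consecutive_triple n.
Proof.
have Fx1 : Fx 1 n = 2 * n%:R + 1 by rewrite /Fx expr1; field.
apply/matrixP => i j; rewrite !mxE /Fy /Fz Fx1.
by case: i => [[|[|[|//]]] _] /=; field.
Qed.

Lemma v345E : v345 = consecutive_triple 1.
Proof.
by apply/matrixP => i j; rewrite !mxE; case: i => [[|[|[|//]]] _] /=; ring.
Qed.

Lemma Amx_consecutive_triple (n : nat) :
  Amx *m consecutive_triple n = consecutive_triple n.+1.
Proof.
apply/matrixP => i j; rewrite !mxE !big_ord_recr big_ord0 /= !mxE /= -natr1.
by case: i => [[|[|[|//]]] _] /=; ring.
Qed.

Theorem mainTheorem1 (n : nat) : (0 < n)%N ->
  Amx ^+ n.-1 *m v345 = (F 1 n)^T.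
Proof.
case: n => // n _ /=.
by rewrite v345E (mulmx_expr_orbit Amx_consecutive_triple) addn1 F1_trE.
Qed.
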